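(* Let $(K,\nu)$ be a valued field with $\nu$ a rank-one discrete valuation normalized so that $\nu(K^* )=\mathbb{Z}$, with valuation ring $R_\nu$ and uniformizer $\pi$. Let $f(x)=x^n+a\in R_\nu[x]$ with $\nu(a)=m\ge1$ and $\gcd(m,n)=1$. Let $\alpha$ be a root of $f$, $L=K(\alpha)$, and $S$ the integral closure of $R_\nu$ in $L$. Let $s,t\in\mathbb{Z}$ satisfy $ms-nt=1$ and put $\theta=\alpha^s/\pi^t$. Then $f(x)$ is irreducible over $K$ and $S=R_\nu[\theta]$ (i.e., $\theta$ generates a power basis of $S$ over $R_\nu$). *)

From HB Require Import structures.
From mathcomp Require Import all_boot all_order all_algebra all_field.
Set Implicit Arguments. Unset Strict Implicit. Unset Printing Implicit Defensive.
Import Order.TTheory GRing.Theory Num.Theory.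
Local Open Scope ring_scope.

(* A (rank-one) discrete valuation on K normalized with v(K^* ) = Z.
   v is a function K -> int; its value at 0 (conventionally +oo) is
   irrelevant and never used. *)
Definition discrete_valuation (K : fieldType) (v : K -> int) : Prop :=
  [/\ (forall x y : K, x != 0 -> y != 0 -> v (x * y) = v x + v y),
      (forall x y : K, x != 0 -> y != 0 -> x + y != 0 ->
          Num.min (v x) (v y) <= v (x + y))
    & (forall z : int, exists x : K, x != 0 /\ v x = z)].

Definition vring (K : fieldType) (v : K -> int) : {pred K} :=
  fun x => (x == 0) || (0 <= v x).

Definition integral_over_vring (K : fieldType) (L : fieldExtType K)
    (v : K -> int) (y : L) : Prop :=
  exists p : {poly K}, [/\ p \is monic, p \is a polyOver (vring v)
                        & root (map_poly (in_alg L) p) y].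

Definition in_vring_adjoin (K : fieldType) (L : fieldExtType K)
    (v : K -> int) (theta y : L) : Prop :=
  exists g : {poly K}, g \is a polyOver (vring v) /\
                       y = (map_poly (in_alg L) g).[theta].

From HB Require Import structures.
From mathcomp Require Import all_boot all_order all_algebra all_field.
From mathcomp Require Import zify ring.
Set Implicit Arguments. Unset Strict Implicit. Unset Printing Implicit Defensive.
Import Order.TTheory GRing.Theory Num.Theory.
Local Open Scope ring_scope.

(* Since [m s - n t = 1], [theta ^+ n = c] with [v c = 1]: [theta] is a root of
   the Eisenstein polynomial [X^n - c].  The key fact is that if [q] has
   degree [< n] and [q(theta)] is integral over [R_v], then [q] has
   coefficients in [R_v].  Otherwise scale [q] so that its coefficients lie in
   [R_v] but are not all divisible by [pi]; if [q_j] is the first unit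
   coefficient, then [(q_j / pi) theta ^+ (n - 1)] is integral, although its
   [n]-th power has valuation [-1].  Applied to [q(theta) = 0], this shows that
   [theta] has degree [n] over [K]; as [K(theta) <= K(alpha)] and [alpha] has
   degree at most [n], [x^n + a] is irreducible, and reducing modulo
   [X^n - c] gives [S = R_v[theta]]. *)

Section Valuation.
Variables (K : fieldType) (v : K -> int).
Hypothesis hv : discrete_valuation v.

(* [val_ge b x] reads [b <= v x], with the convention [v 0 = +oo]. *)
Definition val_ge (b : int) (x : K) := (x == 0) || (b <= v x).

Lemma vringE x : (x \in vring v) = val_ge 0 x.
Proof. by []. Qed.

Lemma valM x y : x != 0 -> y != 0 -> v (x * y) = v x + v y.
Proof. by case: hv => vM _ _; apply: vM. Qed.

Lemma val1 : v 1 = 0.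
Proof.
have : v 1 = v 1 + v 1 by rewrite -valM ?oner_neq0 // mulr1.
lia.
Qed.

Lemma valN x : v (- x) = v x.
Proof.
have [->|x0] := eqVneq x 0; first by rewrite oppr0.
have N1_0 : (-1 : K) != 0 by rewrite oppr_eq0 oner_neq0.
have : v 1 = v (-1) + v (-1) by rewrite -valM // mulrNN mulr1.
rewrite val1 => vN1_double; have vN1 : v (-1) = 0 by lia.
by rewrite -mulN1r valM // vN1 add0r.
Qed.

Lemma valV x : x != 0 -> v x^-1 = - v x.
Proof.
move=> x0; have : v 1 = v x + v x^-1 by rewrite -valM ?invr_neq0 // mulfV.
rewrite val1; lia.
Qed.

Lemma valX x k : x != 0 -> v (x ^+ k) = k%:Z * v x.
Proof.
move=> x0; elim: k => [|k IHk]; first by rewrite expr0 val1 mul0r.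
by rewrite exprS valM ?expf_neq0 // IHk; lia.
Qed.

Lemma valXz x (z : int) : x != 0 -> v (x ^ z) = z * v x.
Proof.
move=> x0; case: z => k; first by rewrite -exprnP valX.
by rewrite NegzE -invr_expz -exprnP valV ?expf_neq0 // valX //; lia.
Qed.

Lemma val_ge_le b b' x : b' <= b -> val_ge b x -> val_ge b' x.
Proof. by rewrite /val_ge => lebb' /orP[->//|lebx]; apply/orP; right; lia. Qed.

Lemma val_geN b x : val_ge b (- x) = val_ge b x.
Proof. by rewrite /val_ge oppr_eq0 valN. Qed.

Lemma val_geD b x y : val_ge b x -> val_ge b y -> val_ge b (x + y).
Proof.
rewrite /val_ge; have [->|x0] := eqVneq x 0; first by rewrite add0r.
have [->|y0] := eqVneq y 0; first by rewrite addr0 (negPf x0) => ?.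
have [//|xy0] := eqVneq (x + y) 0.
case: hv => _ vD _; have := vD _ _ x0 y0 xy0.
by rewrite /Num.min; case: ifP => _ min_le /= bx b_y; apply: le_trans min_le.
Qed.

Lemma val_geM b b' x y : val_ge b x -> val_ge b' y -> val_ge (b + b') (x * y).
Proof.
rewrite /val_ge mulf_eq0; have [//|x0] := eqVneq x 0.
have [//|y0] := eqVneq y 0.
by rewrite /= valM //; lia.
Qed.

Lemma val_ge_sum b (I : Type) (r : seq I) (P : pred I) (F : I -> K) :
  (forall i, P i -> val_ge b (F i)) -> val_ge b (\sum_(i <- r | P i) F i).
Proof.
move=> bF; elim/big_rec: _ => [|i x Pi bx]; first by rewrite /val_ge eqxx.
exact: val_geD (bF i Pi) bx.
Qed.

Lemma val_expz_div x y (s t : int) : x != 0 -> y != 0 ->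
  v (x ^ s / y ^ t) = s * v x - t * v y.
Proof.
by move=> x0 y0; rewrite valM ?invr_eq0 ?expfz_neq0 // valV ?expfz_neq0 // !valXz.
Qed.

End Valuation.

(* The valuation ring, tagged with the proof [hv] so that its subring
   structure, which depends on [hv], can be inferred canonically. *)
Definition vring_of (K : fieldType) (v : K -> int) (hv : discrete_valuation v)
  : {pred K} := vring v.

Lemma vring_ofE (K : fieldType) (v : K -> int) (hv : discrete_valuation v) x :
  (x \in vring_of hv) = val_ge v 0 x.
Proof. by []. Qed.

Lemma vring_subring_closed (K : fieldType) (v : K -> int)
    (hv : discrete_valuation v) : subring_closed (vring_of hv).
Proof.
split=> [|x y|x y]; rewrite !vring_ofE.
- by rewrite /val_ge (val1 hv) lexx orbT.
- by move=> vx vy; rewrite (val_geD hv) // (val_geN hv).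
- by move=> vx vy; have := val_geM hv vx vy.
Qed.

HB.instance Definition _ (K : fieldType) (v : K -> int) (hv : discrete_valuation v) :=
  GRing.isSubringClosed.Build K (vring_of hv) (vring_subring_closed hv).

Definition Rv (K : fieldType) (v : K -> int) (hv : discrete_valuation v) :=
  {x : K | x \in vring_of hv}.
HB.instance Definition _ (K : fieldType) (v : K -> int) (hv : discrete_valuation v) :=
  [isSub for (@sval K (fun x => x \in vring_of hv)) : Rv hv -> K].
HB.instance Definition _ (K : fieldType) (v : K -> int) (hv : discrete_valuation v) :=
  [Choice of Rv hv by <:].
HB.instance Definition _ (K : fieldType) (v : K -> int) (hv : discrete_valuation v) :=
  [SubChoice_isSubComNzRing of Rv hv by <:].

Section Integrality.
Variables (K : fieldType) (v : K -> int) (L : fieldExtType K).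
Hypothesis hv : discrete_valuation v.

Definition vintegral (y : L) := integralOver (in_alg L \o val : Rv hv -> L) y.

Lemma vintegralE y : integral_over_vring v y <-> vintegral y.
Proof.
split; [case=> p [p_monic pR p_y] | case=> q q_monic q_y].
  pose q : {poly Rv hv} := map_poly (insubd (0 : Rv hv)) p.
  have qp : map_poly val q = p.
    rewrite -map_poly_comp map_poly_id // => x px /=.
    by rewrite insubdK //; apply: (allP pR x px).
  exists q; last by rewrite map_poly_comp qp.
  apply/monicP/val_inj; move/monicP: p_monic; rewrite -qp lead_coef_map_inj //.
  exact: val_inj.
exists (map_poly val q); split; first exact: monic_map.
  by apply/allP=> x /(nthP 0)[i _ <-]; rewrite coef_map; apply: valP.
by rewrite -map_poly_comp.
Qed.

Lemma vintegralX y k : vintegral y -> vintegral (y ^+ k).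
Proof.
move=> y_int; rewrite -[y ^+ k]hornerXn; apply: integral_horner => //.
by apply/integral_poly => i; rewrite coefXn; apply: integral_nat.
Qed.

(* If [v r < 0], then in a monic equation
   [r ^+ N = - \sum_(i < N) p_i r ^+ i] the left side has the strictly
   smallest valuation. *)
Lemma vintegral_alg r : vintegral (in_alg L r) <-> r \in vring v.
Proof.
split=> [/vintegralE[p [p_monic]] | rR]; last first.
  by have := integral_id (in_alg L \o val) (Sub r rR : Rv hv).
move=> pR; have {}pR : p \is a polyOver (vring_of hv) := pR.
rewrite fmorph_root => /rootP; rewrite horner_coef.
have size_p : (0 < size p)%N by rewrite size_poly_gt0 monic_neq0.
rewrite -(prednK size_p) big_ord_recr /= -lead_coefE (monicP p_monic) mul1r.
set N := (size p).-1 => /eqP; rewrite addrC addr_eq0 => /eqP rN.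
rewrite vringE /val_ge; have [//|r0] := eqVneq r 0.
case: (lerP 0 (v r)) => // vr_lt0.
have : val_ge v ((N%:Z - 1) * v r) (r ^+ N).
  rewrite rN (val_geN hv); apply: (val_ge_sum hv) => i _.
  have pRi : val_ge v 0 p`_i by rewrite -vring_ofE (polyOverP pR).
  have rXi : val_ge v (i%:Z * v r) (r ^+ i).
    by rewrite /val_ge (valX hv) // lexx orbT.
  apply: val_ge_le (val_geM hv pRi rXi); have := ltn_ord i; nia.
by rewrite /val_ge expf_eq0 (negPf r0) andbF /= (valX hv) //; nia.
Qed.

Lemma vintegral_horner (g : {poly K}) x :
  g \is a polyOver (vring v) -> vintegral x ->
  vintegral (map_poly (in_alg L) g).[x].
Proof.
move=> gR x_int; have {}gR : g \is a polyOver (vring_of hv) := gR.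
apply: integral_horner => //; apply/integral_poly => i.
by rewrite coef_map; apply/vintegral_alg/(polyOverP gR).
Qed.

End Integrality.

Lemma poly_split_at (R : nzRingType) (p : {poly R}) j :
  p = take_poly j p + 'X^j * ((p`_j)%:P + 'X * drop_poly j.+1 p).
Proof.
apply/polyP => i; rewrite coefD coef_take_poly coefXnM coefD coefC coefXM.
rewrite coef_drop_poly; case: (ltngtP i j) => [_ | lt_ji | ->].
- by rewrite addr0.
- by rewrite add0r subn_eq0 leqNgt lt_ji add0r; congr (p`_ _); lia.
- by rewrite subnn add0r addr0.
Qed.

Section AdjoinDegree.
Variables (K : fieldType) (L : fieldExtType K).
Implicit Types (f q : {poly K}) (x y : L).

Lemma adjoin_degree_lt_size f x :
  f != 0 -> root (map_poly (in_alg L) f) x -> (adjoin_degree 1 x < size f)%N.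
Proof.
move=> f0 fx; rewrite ltnNge; apply: contra f0 => size_f.
have Kf : map_poly (in_alg L) f \is a polyOver 1%VS by apply/polyOver1P; exists f.
rewrite -(map_poly_eq0 (in_alg L)) -(root_small_adjoin_poly (x := x) Kf) //.
by rewrite size_map_poly.
Qed.

Lemma adjoin_degree_ge n x :
    (forall q, (size q <= n)%N -> root (map_poly (in_alg L) q) x -> q = 0) ->
  (n <= adjoin_degree 1 x)%N.
Proof.
move=> small_root0; rewrite leqNgt; apply/negP => lt_deg_n.
have /polyOver1P[q minPq] := minPolyOver 1 x.
have q0 : q = 0.
  apply: small_root0; last by rewrite -minPq root_minPoly.
  by rewrite -(size_map_poly (in_alg L)) -minPq size_minPoly.
have := monic_minPoly 1 x.
by rewrite minPq q0 rmorph0 monicE lead_coef0 eq_sym oner_eq0.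
Qed.

Lemma irreducible_root_adjoin_degree f x :
    root (map_poly (in_alg L) f) x -> size f = (adjoin_degree 1 x).+1 ->
  irreducible_poly f.
Proof.
move=> fx size_f; split=> [|q /eqP size_q qf]; first by rewrite size_f.
have f0 : f != 0 by rewrite -size_poly_gt0 size_f.
have q0 : q != 0 by apply: contraTneq qf => ->; rewrite dvd0p.
have [h fE] : exists h : {poly K}, f = h * q by apply/dvdpP.
have h0 : h != 0 by apply: contraNneq f0 => h0; rewrite fE h0 mul0r.
have size_q_gt0 : (0 < size q)%N by rewrite size_poly_gt0.
have size_hq : (size h + size q)%N = (adjoin_degree 1 x).+2.
  by rewrite -size_f fE size_mul // prednK // addn_gt0 size_q_gt0 orbT.
rewrite -dvdp_size_eqp // eqn_leq dvdp_leq //= size_f.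
have /orP[hx | qx] :
    root (map_poly (in_alg L) h) x || root (map_poly (in_alg L) q) x.
  by rewrite -rootM -rmorphM -fE.
- by have := adjoin_degree_lt_size h0 hx; lia.
- exact: adjoin_degree_lt_size q0 qx.
Qed.

Lemma Fadjoin_eq_of_mem x y :
    y \in <<1; x>>%VS -> (adjoin_degree 1 x <= adjoin_degree 1 y)%N ->
  <<1; y>>%VS = <<1; x>>%VS.
Proof.
move=> yx le_deg; apply/eqP; rewrite eqEdim; apply/andP; split.
  by apply/FadjoinP; split; [apply: sub1v | ].
by rewrite !dim_Fadjoin leq_mul2r le_deg orbT.
Qed.

End AdjoinDegree.

Section EisensteinRoot.
Variables (K : fieldType) (v : K -> int) (L : fieldExtType K).
Hypothesis hv : discrete_valuation v.
Variables (pi c : K) (n : nat) (theta : L).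
Hypotheses (pi0 : pi != 0) (vpi : v pi = 1) (c0 : c != 0) (vc : v c = 1).
Hypotheses (n_gt0 : (0 < n)%N) (theta_n : theta ^+ n = in_alg L c).

Implicit Types (q d : {poly K}).

Local Notation R := (vring_of hv).
Local Notation ev q := (map_poly (in_alg L) q).[theta].

Lemma pi_vring : pi \in R.
Proof. by rewrite vring_ofE /val_ge vpi orbT. Qed.

Lemma root_eisenstein : root (map_poly (in_alg L) ('X^n - c%:P)) theta.
Proof. by rewrite /root rmorphB /= map_polyXn map_polyC /= !hornerE theta_n subrr. Qed.

Lemma vintegral_theta : vintegral hv theta.
Proof.
apply/vintegralE; exists ('X^n - c%:P); split; last exact: root_eisenstein.
  exact: monicXnsubC.
have cR : c \in R by rewrite vring_ofE /val_ge vc orbT.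
by have : 'X^n - c%:P \is a polyOver R by rewrite rpredB ?polyOverXn ?polyOverC.
Qed.

Lemma exists_scale_polyOver q : exists e, pi ^+ e *: q \is a polyOver R.
Proof.
exists (\max_(i < size q) `|v q`_i|)%N; apply/polyOverP => i.
rewrite coefZ vring_ofE /val_ge mulf_eq0 expf_eq0 (negPf pi0) andbF /=.
have [lt_i_q|le_q_i] := ltnP i (size q); last by rewrite nth_default ?eqxx.
have [->|qi0] := eqVneq q`_i 0; rewrite ?eqxx //=.
rewrite (valM hv) ?expf_neq0 // (valX hv) // vpi mulr1.
have := @leq_bigmax _ (fun i : 'I_(size q) => `|v q`_i|%N) (Ordinal lt_i_q).
by move=> /= ?; lia.
Qed.

(* [((u / pi) * theta ^+ k) ^+ n = (u / pi) ^+ n * c ^+ k] has valuation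
   [k - n < 0]. *)
Lemma not_vintegral_unit_div_pi u k : u != 0 -> v u = 0 -> (k < n)%N ->
  ~ vintegral hv (in_alg L (u / pi) * theta ^+ k).
Proof.
move=> u0 vu lt_kn /(vintegralX n).
rewrite exprMn -exprM mulnC exprM theta_n -!rmorphXn -rmorphM => /vintegral_alg.
have upi0 : u / pi != 0 by rewrite mulf_neq0 ?invr_eq0.
rewrite vringE /val_ge mulf_eq0 !expf_eq0 (negPf upi0) (negPf c0) !andbF /=.
rewrite (valM hv) ?expf_neq0 // !(valX hv) // (valM hv) ?invr_eq0 //.
by rewrite (valV hv) // vu vpi vc; lia.
Qed.

(* If [d_j] is the first unit coefficient of [d], write
   [d = pi lo + X^j (d_j + X hi)]: removing [lo(theta)] from [d(theta) / pi]
   and multiplying by [theta ^+ (n - 1 - j)] leaves the non-integral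
   [(d_j / pi) theta ^+ (n - 1)] plus the integral [(c / pi) hi(theta)]. *)
Lemma polyOver_scale_invpi d :
    d \is a polyOver R -> (size d <= n)%N -> vintegral hv (ev d / in_alg L pi) ->
  pi^-1 *: d \is a polyOver R.
Proof.
move=> dR size_d d_int.
have invpi : val_ge v (-1) pi^-1 by rewrite /val_ge (valV hv) // vpi lexx orbT.
suff d_val1 i : val_ge v 1 d`_i.
  apply/polyOverP => i; rewrite coefZ vring_ofE.
  by have := val_geM hv invpi (d_val1 i); rewrite addNr.
apply: contraT => d_i.
have [j d_j j_min] := ex_minnP (ex_intro (fun j => ~~ val_ge v 1 d`_j) i d_i).
have dj0 : d`_j != 0 by apply: contraNneq d_j => ->; rewrite /val_ge eqxx.
have vdj : v d`_j = 0.
  by move: d_j (polyOverP dR j); rewrite vring_ofE /val_ge (negPf dj0) /=; lia.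
have lt_jn : (j < n)%N.
  by apply: leq_trans size_d; rewrite ltnNge; apply: contra dj0 => ?; rewrite nth_default.
pose lo := pi^-1 *: take_poly j d; pose hi := drop_poly j.+1 d.
have loR : lo \is a polyOver R.
  apply/polyOverP => i'; rewrite coefZ coef_take_poly vring_ofE mulrC.
  case: ifP => [lt_i'j | _]; last by rewrite mul0r /val_ge eqxx.
  have /negPn d_i'1 : ~~ ~~ val_ge v 1 d`_i'.
    by apply: contraL lt_i'j => /j_min; rewrite -leqNgt.
  by have := val_geM hv d_i'1 invpi; rewrite addrN.
have hiR : hi \is a polyOver R.
  by apply/polyOverP => i'; rewrite coef_drop_poly (polyOverP dR).
have P0 : in_alg L pi != 0 by rewrite fmorph_eq0.
set P := in_alg L pi; set D := in_alg L d`_j.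
have ev_d : ev d = P * ev lo + theta ^+ j * (D + theta * ev hi).
  rewrite {1}(poly_split_at d j) /lo map_polyZ hornerZ fmorphV mulVKf //.
  by rewrite !(rmorphD, rmorphM) /= map_polyXn map_polyC map_polyX !hornerE.
set w := P^-1 * theta ^+ j * (D + theta * ev hi).
have w_int : vintegral hv w.
  have -> : w = ev d / P - ev lo by rewrite ev_d /w; field.
  by apply: integral_sub => //; apply: vintegral_horner loR vintegral_theta.
suff x_int : vintegral hv (in_alg L (d`_j / pi) * theta ^+ n.-1).
  by case: (not_vintegral_unit_div_pi dj0 vdj _ x_int); rewrite ltn_predL.
have -> : in_alg L (d`_j / pi) * theta ^+ n.-1 =
    w * theta ^+ (n.-1 - j) - in_alg L (c / pi) * ev hi.
  have theta_n1 : theta ^+ n.-1 = theta ^+ j * theta ^+ (n.-1 - j).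
    by rewrite -exprD subnKC // -ltnS prednK.
  have -> : in_alg L (d`_j / pi) = D / P by rewrite rmorphM fmorphV.
  have -> : in_alg L (c / pi) = theta ^+ n.-1 * theta / P.
    by rewrite -exprSr prednK // theta_n rmorphM fmorphV.
  by rewrite theta_n1 /w; field.
apply: integral_sub.
  by apply: integral_mul w_int _; apply: vintegralX vintegral_theta.
apply: integral_mul; last exact: vintegral_horner hiR vintegral_theta.
apply/vintegral_alg; rewrite vringE /val_ge mulf_eq0 invr_eq0.
by rewrite (negPf pi0) (negPf c0) /= (valM hv) ?invr_eq0 // (valV hv) // vc vpi addrN.
Qed.

Lemma polyOver_of_vintegral q :
  (size q <= n)%N -> vintegral hv (ev q) -> q \is a polyOver R.
Proof.
move=> size_q q_int; have [e] := exists_scale_polyOver q.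
elim: e => [|e IHe]; first by rewrite expr0 scale1r.
move=> qR; apply: IHe.
have qe_int : vintegral hv (ev (pi ^+ e.+1 *: q) / in_alg L pi).
  have -> : ev (pi ^+ e.+1 *: q) / in_alg L pi = in_alg L (pi ^+ e) * ev q.
    have P0 : in_alg L pi != 0 by rewrite fmorph_eq0.
    by rewrite map_polyZ hornerZ exprS rmorphM; field.
  by apply: integral_mul q_int; apply/vintegral_alg; exact: rpredX pi_vring.
have := polyOver_scale_invpi qR (leq_trans (size_scale_leq _ _) size_q) qe_int.
by rewrite scalerA exprS mulKf.
Qed.

Lemma eisenstein_small_root q :
  (size q <= n)%N -> root (map_poly (in_alg L) q) theta -> q = 0.
Proof.
move=> size_q /rootP q_theta; apply/eqP; apply: contraT => q0.
set u := lead_coef q; have u0 : u != 0 by rewrite lead_coef_eq0.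
have uqR : (u * pi)^-1 *: q \is a polyOver R.
  apply: polyOver_of_vintegral; first exact: leq_trans (size_scale_leq _ _) size_q.
  by rewrite map_polyZ hornerZ q_theta mulr0; apply: integral0.
have := polyOverP uqR (size q).-1.
rewrite coefZ -lead_coefE -/u invfM mulrAC mulVf // mul1r vring_ofE /val_ge.
by rewrite invr_eq0 (negPf pi0) (valV hv) // vpi.
Qed.

Lemma adjoin_degree_eisenstein : adjoin_degree 1 theta = n.
Proof.
have f0 : 'X^n - c%:P != 0 by rewrite -size_poly_gt0 size_XnsubC.
apply/eqP; rewrite eqn_leq -ltnS -(size_XnsubC c n_gt0).
rewrite adjoin_degree_lt_size ?root_eisenstein //=.
by apply: adjoin_degree_ge => q; apply: eisenstein_small_root.
Qed.

Lemma eisenstein_integral_closure y :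
  (y \in <<1; theta>>%VS /\ integral_over_vring v y) <-> in_vring_adjoin v theta y.
Proof.
split=> [[/Fadjoin_polyP[p /polyOver1P[q ->] ->] /vintegralE q_int] | [g [gR ->]]].
  pose f := 'X^n - c%:P.
  have ev_mod : ev q = ev (q %% f).
    rewrite {1}(divp_eq q f) rmorphD rmorphM /= hornerD hornerM.
    by rewrite (rootP root_eisenstein) mulr0 add0r.
  exists (q %% f); split; last exact: ev_mod.
  apply: polyOver_of_vintegral; last by rewrite -ev_mod.
  by rewrite -ltnS -(size_XnsubC c n_gt0) ltn_modp -size_poly_gt0 size_XnsubC.
split; first by apply: mempx_Fadjoin; apply/polyOver1P; exists g.
by apply/vintegralE; apply: vintegral_horner gR vintegral_theta.
Qed.

End EisensteinRoot.

Lemma exprn_expz_div (K : fieldType) (L : fieldExtType K) (pi a : K) (alpha : L)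
    (n : nat) (s t : int) :
  alpha ^+ n = - in_alg L a ->
  (alpha ^ s / in_alg L pi ^ t) ^+ n = in_alg L ((- a) ^ s / pi ^ (t * n%:Z)).
Proof.
move=> alpha_n.
have alpha_sn : (alpha ^ s) ^+ n = in_alg L ((- a) ^ s).
  by rewrite exprnP exprz_exp mulrC -exprz_exp -exprnP alpha_n -rmorphN fmorphXz.
have pi_tn : (in_alg L pi ^ t) ^+ n = in_alg L (pi ^ (t * n%:Z)).
  by rewrite exprnP exprz_exp fmorphXz.
by rewrite exprMn exprVn alpha_sn pi_tn -fmorphV -rmorphM.
Qed.

Lemma exprn_opp_alg_gt0 (K : fieldType) (v : K -> int) (L : fieldExtType K)
    (hv : discrete_valuation v) (a : K) (alpha : L) (n : nat) :
  v a != 0 -> alpha ^+ n = - in_alg L a -> (0 < n)%N.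
Proof.
move=> va0; case: n => // /esym/eqP; rewrite expr0 -rmorphN.
rewrite -(rmorph1 (in_alg L)) (inj_eq (fmorph_inj _)) => /eqP a_N1.
by move: va0; rewrite -[a]opprK a_N1 (valN hv) (val1 hv).
Qed.

Unset Implicit Arguments.

Theorem corollary3p3 (K : fieldType) (v : K -> int) (L : fieldExtType K)
    (pi a : K) (n : nat) (m : nat) (alpha : L) (s t : int) :
  discrete_valuation v ->
  pi != 0 -> v pi = 1 ->
  a != 0 -> v a = m%:Z -> (1 <= m)%N -> coprime m n ->
  root (map_poly (in_alg L) ('X^n + a%:P)) alpha ->
  m%:Z * s - n%:Z * t = 1 ->
  let theta := alpha ^ s / (in_alg L pi) ^ t in
  irreducible_poly ('X^n + a%:P : {poly K}) /\
  (forall y : L,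
     (y \in <<1; alpha>>%VS /\ integral_over_vring v y) <->
     in_vring_adjoin v theta y).
Proof.
(* Coprimality of [m] and [n] is already implied by [m * s - n * t = 1]. *)
move=> hv pi0 vpi a0 va m_gt0 _ f_alpha hst theta.
have alpha_n : alpha ^+ n = - in_alg L a.
  apply/eqP; rewrite -subr_eq0 opprK; move/rootP: f_alpha.
  by rewrite rmorphD /= map_polyXn map_polyC /= !hornerE => /eqP.
have n_gt0 : (0 < n)%N.
  have va0 : v a != 0 by rewrite va eqz_nat -lt0n.
  exact: (exprn_opp_alg_gt0 hv va0 alpha_n).
pose c := (- a) ^ s / pi ^ (t * n%:Z).
have c0 : c != 0 by rewrite mulf_neq0 ?invr_eq0 ?expfz_neq0 ?oppr_eq0.
have vc : v c = 1.
  by rewrite (val_expz_div hv) ?expfz_neq0 ?oppr_eq0 // (valN hv) va vpi; lia.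
have theta_n : theta ^+ n = in_alg L c by apply: exprn_expz_div.
have deg_theta := adjoin_degree_eisenstein hv pi0 vpi c0 vc n_gt0 theta_n.
have theta_alpha : <<1; theta>>%VS = <<1; alpha>>%VS.
  apply: Fadjoin_eq_of_mem.
    by rewrite rpred_div ?rpredXz ?memv_adjoin // memvZ // mem1v.
  rewrite deg_theta -ltnS -(size_XnaddC a n_gt0) adjoin_degree_lt_size //.
  by rewrite -size_poly_gt0 size_XnaddC.
split=> [|y]; last first.
  rewrite -theta_alpha.
  exact: (eisenstein_integral_closure hv pi0 vpi c0 vc n_gt0 theta_n).
apply: (irreducible_root_adjoin_degree f_alpha).
by rewrite size_XnaddC // -deg_theta !adjoin_degreeE theta_alpha.
Qed.
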